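(* Let $d\in\Lambda$ be a root ($d^2=-2$), $d^\perp$ its orthogonal complement in $\Lambda$, and $O^+(\Lambda)_d=\{g\in O^+(\Lambda):g(d)=d\}$. Then the restriction map $O^+(\Lambda)_d\ni g\mapsto g|_{d^\perp}\in O^+(d^\perp)$ is surjective.
   Context: $\Lambda=\mathbb U(2)\oplus\mathbb U\oplus\mathbb E_8(2)$ ($\mathbb U$ hyperbolic plane, $\mathbb E_8$ negative-definite, $(2)$ scaling). For a lattice $L$ of signature $(2,n)$, $\Omega_L$ is $\{[\omega]\in\mathbf P(L\otimes\mathbb C):\omega^2=0,\langle\omega,\bar\omega\rangle>0\}$, which has two components, and $O^+(L)$ is the index-2 subgroup of $O(L)$ preserving each component. The component $\Omega^+_{d^\perp}$ is chosen to be $\{\omega\in\Omega^+_\Lambda:\langle\omega,d\rangle=0\}$. *)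

From HB Require Import structures.
From mathcomp Require Import all_boot all_order all_algebra.
From mathcomp Require Import all_classical all_reals all_analysis.
From mathcomp Require Import Rstruct Rstruct_topology.
Set Implicit Arguments. Unset Strict Implicit. Unset Printing Implicit Defensive.
Import Order.TTheory GRing.Theory Num.Theory.
Local Open Scope ring_scope.
Local Open Scope classical_set_scope.

(* Lattices are given by integer Gram matrices Q : 'M[int]_n;
   vectors are row vectors, b(v,w) = v Q w^T; an endomorphism is a matrix
   acting on the right, v |-> v *m g. *)

Definition bil n (Q : 'M[int]_n) (v w : 'rV[int]_n) : int :=
  (v *m Q *m w^T) 0 0.

Definition bilR n (Q : 'M[int]_n) (v w : 'rV[Rdefinitions.R]_n) : Rdefinitions.R :=
  (v *m map_mx intr Q *m w^T) 0 0.

(* The affine cone over Omega_L inside L (x) C, where omega = x + i y is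
   encoded by the pair (x, y) of real vectors:
   omega^2 = 0  <->  x.x = y.y /\ x.y = 0,   <omega, conj omega> = x.x + y.y > 0 *)
Definition period_cone n (Q : 'M[int]_n) : set ('rV[Rdefinitions.R]_n * 'rV[Rdefinitions.R]_n) :=
  [set p | bilR Q p.1 p.1 = bilR Q p.2 p.2 /\ bilR Q p.1 p.2 = 0 /\
           0 < bilR Q p.1 p.1 + bilR Q p.2 p.2].

Definition orthogonal_group n (Q : 'M[int]_n) : pred 'M[int]_n :=
  fun g => (g \in unitmx) && (g *m Q *m g^T == Q).

(* O^+(L): isometries preserving each connected component of Omega_L
   (equivalently, of its affine cone in L (x) C = R^n x R^n) *)
Definition Oplus n (Q : 'M[int]_n) (g : 'M[int]_n) : Prop :=
  orthogonal_group Q g /\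
  forall p, period_cone Q p ->
    connected_component (period_cone Q) p
      (p.1 *m map_mx intr g, p.2 *m map_mx intr g).

(* The Gram matrix of Lambda = U(2) + U + E_8(2) (E_8 negative definite) *)
Definition e8_edge (i j : nat) : bool :=
  [|| (i == 0) && (j == 2), (i == 2) && (j == 3), (i == 3) && (j == 4),
      (i == 4) && (j == 5), (i == 5) && (j == 6), (i == 6) && (j == 7)
    | (i == 1) && (j == 3)]%N.

Definition lambda_entry (i j : nat) : int :=
  if (i < 2)%N && (j < 2)%N then (if i == j then 0 else 2)
  else if (2 <= i < 4)%N && (2 <= j < 4)%N then (if i == j then 0 else 1)
  else if (4 <= i)%N && (4 <= j)%N then
    (if i == j then -4
     else if e8_edge (i - 4) (j - 4) || e8_edge (j - 4) (i - 4) then 2 else 0)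
  else 0.

Definition gramLambda : 'M[int]_12 := \matrix_(i, j) lambda_entry i j.

Definition Zbasis_perp (d : 'rV[int]_12) (B : 'M[int]_(11, 12)) : Prop :=
  (forall i, bil gramLambda (row i B) d = 0) /\
  (forall v : 'rV[int]_12, bil gramLambda v d = 0 -> exists c : 'rV[int]_11, v = c *m B) /\
  (forall c : 'rV[int]_11, c *m B = 0 -> c = 0).

Definition gramPerp (B : 'M[int]_(11, 12)) : 'M[int]_11 := B *m gramLambda *m B^T.

From mathcomp Require Import all_boot all_order all_algebra.
From mathcomp Require Import all_classical all_reals all_analysis.
From mathcomp Require Import zify ring lra.
From mathcomp Require Import Rstruct Rstruct_topology.
Set Implicit Arguments. Unset Strict Implicit. Unset Printing Implicit Defensive.
Import Order.TTheory GRing.Theory Num.Theory.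
Import numFieldNormedType.Exports.
Local Open Scope ring_scope.
Local Open Scope classical_set_scope.

(* Since d^2 = -2 and (z, d) = 1 for a suitable z, Lambda = d^perp + Z z and
   2 Lambda lies in d^perp + Z d.  Hence the map g which is h on d^perp and sends
   z to z + w (w in d^perp) is an isometry as soon as it fixes d, i.e. as soon as
   h v = v + 2 w for the glue vector v = d + 2 z of d^perp.  For
   Lambda = U(2) + U + E8(2) one can choose z with (v, w) = (w, w) mod 4 on d^perp;
   h preserves this congruence, so (h v - v, d^perp) lies in 4Z, and since
   Lambda meets 4 Lambda^vee in 2 Lambda this forces h v - v in 2 d^perp.
   Finally g preserves the components of the period cone: inside the cone every
   point can be pushed into d^perp (x) C, where g acts as h. *)

Definition bform (R : comPzRingType) n (M : 'M[R]_n) (a b : 'rV[R]_n) : R :=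
  (a *m M *m b^T) 0 0.

Section BilinearForm.
Variables (R : comPzRingType) (n : nat) (M : 'M[R]_n).
Implicit Types a b c : 'rV[R]_n.

Lemma bformDl a b c : bform M (a + b) c = bform M a c + bform M b c.
Proof. by rewrite /bform !mulmxDl mxE. Qed.

Lemma bformDr a b c : bform M a (b + c) = bform M a b + bform M a c.
Proof. by rewrite /bform linearD /= mulmxDr mxE. Qed.

Lemma bformZl k a c : bform M (k *: a) c = k * bform M a c.
Proof. by rewrite /bform -!scalemxAl mxE. Qed.

Lemma bformZr k a c : bform M a (k *: c) = k * bform M a c.
Proof. by rewrite /bform linearZ /= -scalemxAr mxE. Qed.

Lemma bformBl a b c : bform M (a - b) c = bform M a c - bform M b c.
Proof. by rewrite bformDl -scaleN1r bformZl mulN1r. Qed.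

Lemma bformBr a b c : bform M a (b - c) = bform M a b - bform M a c.
Proof. by rewrite bformDr -scaleN1r bformZr mulN1r. Qed.

Lemma bform_trmx a b : bform M^T a b = bform M b a.
Proof.
have -> : bform M b a = (b *m M *m a^T)^T 0 0 by rewrite mxE.
by rewrite !trmx_mul trmxK mulmxA.
Qed.

Lemma bform_sym a b : M^T = M -> bform M a b = bform M b a.
Proof. by move=> MT; rewrite -bform_trmx MT. Qed.

Lemma bform_mulmx m (N : 'M[R]_(m, n)) (a b : 'rV[R]_m) :
  bform M (a *m N) (b *m N) = bform (N *m M *m N^T) a b.
Proof. by rewrite /bform trmx_mul !mulmxA. Qed.

Lemma bform_deltar a j : bform M a (delta_mx 0 j) = (a *m M) 0 j.
Proof. by rewrite /bform trmx_delta -colE !mxE. Qed.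

Lemma bform_delta i j : bform M (delta_mx 0 i) (delta_mx 0 j) = M i j.
Proof. by rewrite bform_deltar -rowE mxE. Qed.

Lemma bformDM (N : 'M[R]_n) a b : bform (M + N) a b = bform M a b + bform N a b.
Proof. by rewrite /bform mulmxDr mulmxDl mxE. Qed.

Lemma bformZM k a b : bform (k *: M) a b = k * bform M a b.
Proof. by rewrite /bform -scalemxAr -scalemxAl mxE. Qed.

End BilinearForm.

Lemma bform_delta_mx (R : comPzRingType) n (i j : 'I_n) (a b : 'rV[R]_n) :
  bform (delta_mx i j) a b = a 0 i * b 0 j.
Proof.
rewrite /bform -(@mul_delta_mx _ n 1 n 0 i j) mulmxA -colE -mulmxA -rowE.
by rewrite !mxE big_ord1 !mxE.
Qed.

Lemma bform_inj (R : comPzRingType) n (M N : 'M[R]_n) :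
  (forall a b, bform M a b = bform N a b) -> M = N.
Proof. by move=> MN; apply/matrixP => i j; rewrite -!bform_delta MN. Qed.

Lemma bform_map (R S : comPzRingType) (f : {rmorphism R -> S}) n (M : 'M[R]_n) a b :
  bform (map_mx f M) (map_mx f a) (map_mx f b) = f (bform M a b).
Proof. by rewrite /bform map_trmx -!map_mxM mxE. Qed.

Lemma perp_coord (R : comPzRingType) n m (M : 'M[R]_n) (d z : 'rV[R]_n)
    (B : 'M[R]_(m, n)) (D : 'M[R]_(n, m)) :
  D *m B + M *m d^T *m z = 1%:M -> forall X, bform M X d = 0 -> X = X *m D *m B.
Proof.
move=> DB X Xd; rewrite -mulmxA -[X in X = _]mulmx1 -DB mulmxDr.
by rewrite !mulmxA [X *m M *m d^T]mx11_scalar -/(bform M X d) Xd mul_scalar_mx scale0r addr0.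
Qed.

(** * Extending isometries across a root *)

Section RootExtension.
Variables (m : nat) (M : 'M[int]_m.+1) (d z : 'rV[int]_m.+1) (B : 'M[int]_(m, m.+1)).
Hypotheses (M_sym : M^T = M) (dd : bform M d d = -2) (zd : bform M z d = 1).
Hypotheses (B_perp : forall i, bform M (row i B) d = 0)
  (B_span : forall v, bform M v d = 0 -> exists c, v = c *m B)
  (B_free : forall c : 'rV_m, c *m B = 0 -> c = 0).

Lemma bform_mulmx_perp c : bform M (c *m B) d = 0.
Proof.
have BMd : B *m M *m d^T = 0.
  apply/matrixP => i j; rewrite (ord1 j) [RHS]mxE -(B_perp i) /bform -!row_mul.
  by rewrite [RHS]mxE.
by rewrite /bform -!mulmxA [B *m _]mulmxA BMd mulmx0 mxE.
Qed.

Lemma bform_perp_mulmx c : bform M d (c *m B) = 0.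
Proof. by rewrite (bform_sym _ _ M_sym) bform_mulmx_perp. Qed.

Lemma perp_decomp y : exists c, y = c *m B + bform M y d *: z.
Proof.
have [c yE] : exists c, y - bform M y d *: z = c *m B.
  by apply: B_span; rewrite bformBl bformZl zd mulr1 subrr.
by exists c; rewrite -yE subrK.
Qed.

Lemma perp_decomp_mx : exists D : 'M[int]_(m.+1, m), D *m B + M *m d^T *m z = 1%:M.
Proof.
have [c cE] := choice (fun i => perp_decomp (delta_mx 0 i)).
exists (\matrix_(i < m.+1) c i); apply/row_matrixP => i.
rewrite row1 linearD /= !row_mul rowK cE; congr (_ + _).
by rewrite [row i M *m _]mx11_scalar mul_scalar_mx /bform -rowE.
Qed.

Lemma col_mx_unit : col_mx z B \in unitmx.
Proof.
have [D DE] := perp_decomp_mx.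
suff /mulmx1_unit[] : row_mx (M *m d^T) D *m col_mx z B = 1%:M by [].
by rewrite mul_row_col addrC.
Qed.

Definition root_extension (h : 'M[int]_m) (w : 'rV[int]_m) : 'M[int]_m.+1 :=
  invmx (col_mx z B) *m (block_mx 1 w 0 h *m col_mx z B).

Lemma root_extension_col h w :
  col_mx z B *m root_extension h w = col_mx (z + w *m B) (h *m B).
Proof.
rewrite /root_extension mulmxA mulmxV ?col_mx_unit // mul1mx mul_block_col.
by rewrite !mul1mx mul0mx add0r.
Qed.

Lemma root_extension_z h w : z *m root_extension h w = z + w *m B.
Proof. by have := root_extension_col h w; rewrite mul_col_mx => /eq_col_mx[]. Qed.

Lemma root_extension_B h w : B *m root_extension h w = h *m B.
Proof. by have := root_extension_col h w; rewrite mul_col_mx => /eq_col_mx[]. Qed.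

Lemma root_extension_unit h w : h \in unitmx -> root_extension h w \in unitmx.
Proof.
move=> hu; rewrite !unitmx_mul unitmx_inv col_mx_unit andbT /=.
by rewrite unitmxE (det_ublock (1 : 'M[int]_1)) det1 mul1r -unitmxE.
Qed.

Lemma double_decomp a : exists c k, 2 *: a = c *m B + k *: d.
Proof.
have [c aE] : exists c, 2 *: a + bform M a d *: d = c *m B.
  by apply: B_span; rewrite bformDl !bformZl dd; ring.
by exists c, (- bform M a d); rewrite -aE scaleNr addrK.
Qed.

Lemma bform_perp_sum c c' k k' :
  bform M (c *m B + k *: d) (c' *m B + k' *: d) =
  bform M (c *m B) (c' *m B) + k * k' * bform M d d.
Proof.
rewrite !(bformDl, bformDr, bformZl, bformZr) bform_mulmx_perp bform_perp_mulmx.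
by ring.
Qed.

Lemma extension_isometry h g :
  h *m (B *m M *m B^T) *m h^T = B *m M *m B^T -> d *m g = d -> B *m g = h *m B ->
  g *m M *m g^T = M.
Proof.
move=> h_iso dg Bg; apply: bform_inj => a a'; rewrite -bform_mulmx.
have image c k : (c *m B + k *: d) *m g = (c *m h) *m B + k *: d.
  by rewrite mulmxDl -scalemxAl dg -mulmxA Bg mulmxA.
have [c [k aE]] := double_decomp a; have [c' [k' a'E]] := double_decomp a'.
suff : 4 * bform M (a *m g) (a' *m g) = 4 * bform M a a' by lia.
have -> : 4 * bform M a a' = bform M (2 *: a) (2 *: a') by rewrite bformZl bformZr mulrA.
rewrite [LHS](_ : _ = bform M (2 *: a *m g) (2 *: a' *m g)); last first.
  by rewrite -!scalemxAl bformZl bformZr mulrA.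
by rewrite aE a'E !image !bform_perp_sum !bform_mulmx h_iso.
Qed.

Hypothesis z_char :
  forall w, bform M w d = 0 -> (2 * bform M z w = bform M w w %[mod 4])%Z.
Hypothesis dvd4_even :
  forall r, (forall y, (4 %| bform M r y)%Z) -> exists r', r = 2 *: r'.

Section Glue.
Variable cv : 'rV[int]_m.
Hypothesis cvB : cv *m B = d + 2 *: z.

Lemma root_extension_fixes_root h w :
  cv *m h = cv + 2 *: w -> d *m root_extension h w = d.
Proof.
move=> cvh; have dE : d = cv *m B - 2 *: z by rewrite cvB addrK.
rewrite {1}dE mulmxBl -mulmxA root_extension_B mulmxA cvh -scalemxAl root_extension_z.
by rewrite mulmxDl -scalemxAl scalerDr opprD addrACA subrr addr0 -dE.
Qed.

Lemma glue_char c : (bform M (cv *m B) (c *m B) = bform M (c *m B) (c *m B) %[mod 4])%Z.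
Proof.
by rewrite cvB bformDl bformZl bform_perp_mulmx add0r; apply/z_char/bform_mulmx_perp.
Qed.

Lemma isometry_glue_mod4 h : h \in unitmx -> h *m (B *m M *m B^T) *m h^T = B *m M *m B^T ->
  forall c, (bform M (cv *m h *m B) (c *m B) = bform M (cv *m B) (c *m B) %[mod 4])%Z.
Proof.
move=> hu h_iso c.
have iso c1 c2 : bform M (c1 *m h *m B) (c2 *m h *m B) = bform M (c1 *m B) (c2 *m B).
  by rewrite !bform_mulmx h_iso.
have [c' ->] : exists c', c = c' *m h by exists (c *m invmx h); rewrite mulmxKV.
by rewrite iso (glue_char c') -(iso c' c') -glue_char.
Qed.

Lemma glue_fixed_mod2 h : h \in unitmx -> h *m (B *m M *m B^T) *m h^T = B *m M *m B^T ->
  exists w, cv *m h = cv + 2 *: w.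
Proof.
(* u = h v - v is orthogonal mod 4 to d^perp, hence u - (u, z) d to all of Lambda. *)
move=> hu h_iso; set u := (cv *m h - cv) *m B.
have u4 c : (4 %| bform M u (c *m B))%Z.
  by rewrite /u mulmxBl bformBl -eqz_mod_dvd; apply/eqP/isometry_glue_mod4.
have [t ut] : exists t, bform M u z = 2 * t.
  have := u4 cv; rewrite cvB bformDr bformZr bform_mulmx_perp add0r.
  by exists (bform M u z %/ 2)%Z; lia.
have [r' rE] : exists r', u - (2 * t) *: d = 2 *: r'.
  apply: dvd4_even => y; have [c ->] := perp_decomp y.
  rewrite bformBl bformZl !bformDr !bformZr bform_perp_mulmx (bform_sym d z M_sym) zd ut.
  by have := u4 c; lia.
have [w wE] : exists w, r' + t *: d = w *m B.
  apply: B_span; suff : 2 * bform M (r' + t *: d) d = 0 by lia.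
  rewrite -bformZl scalerDr -rE scalerA subrK; exact: bform_mulmx_perp.
exists w; suff /B_free/eqP : (cv *m h - cv - 2 *: w) *m B = 0.
  by rewrite subr_eq0 subr_eq addrC => /eqP.
by rewrite mulmxBl -/u -scalemxAl -wE scalerDr scalerA -rE subrK subrr.
Qed.

End Glue.

Theorem isometry_extends h : h \in unitmx ->
  h *m (B *m M *m B^T) *m h^T = B *m M *m B^T ->
  exists g, [/\ g \in unitmx, g *m M *m g^T = M, d *m g = d & B *m g = h *m B].
Proof.
move=> hu h_iso.
have [cv cvB] : exists cv, d + 2 *: z = cv *m B.
  by apply: B_span; rewrite bformDl bformZl dd zd.
have [w cvh] := glue_fixed_mod2 (esym cvB) hu h_iso.
have dg := root_extension_fixes_root (esym cvB) cvh; have Bg := root_extension_B h w.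
exists (root_extension h w); split => //; first exact: root_extension_unit.
exact: extension_isometry h_iso dg Bg.
Qed.
End RootExtension.

(** * Components of the period cone *)

Lemma connected_component_path (R : realType) (T : topologicalType) (A : set T) (f : R -> T) :
  {in `[0, 1]%R, continuous f} -> (forall t, 0 <= t <= 1 -> A (f t)) ->
  connected_component A (f 0) (f 1).
Proof.
move=> fc fA; have I01 t : 0 <= t <= 1 -> `[(0 : R), 1] t by rewrite /= in_itv.
exists (f @` `[0, 1]); last by exists 1 => //; apply: I01; rewrite lexx ler01.
split; first by exists 0 => //; apply: I01; rewrite lexx ler01.
  by move=> _ [t + <-]; rewrite /= in_itv /= => /fA.
apply: connected_continuous_connected.
  by apply/connected_intervalP; exact: interval_is_interval.
by apply: continuous_in_subspaceT => t; rewrite inE /= => /fc.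
Qed.

Lemma connected_component_map (T U : topologicalType) (A : set T) (B : set U) (f : T -> U) :
  continuous f -> (forall x, A x -> B (f x)) ->
  forall x y, connected_component A x y -> connected_component B (f x) (f y).
Proof.
move=> fc fAB x y [C [Cx CA Cconn] Cy]; exists (f @` C); last by exists y.
split; first by exists x.
  by move=> _ [w Cw <-]; exact/fAB/CA.
by apply: connected_continuous_connected Cconn _; exact: continuous_subspaceT.
Qed.

Section MatrixContinuity.
Variable R : realType.

Lemma mulmx_continuous m n (N : 'M[R]_(m, n)) : continuous (fun c : 'rV[R]_m => c *m N).
Proof.
rewrite (_ : (fun c => c *m N) = (fun c => \sum_(i < m) c 0 i *: row i N)).
  apply: (@continuous_big _ _ +%R 0 xpredT add_continuous) => i _ c.
  by apply: continuousZr_tmp; exact: coord_continuous.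
by apply/funext => c; rewrite mulmx_sum_row.
Qed.

Lemma pair_mulmx_continuous m n (N : 'M[R]_(m, n)) :
  continuous (fun p : 'rV[R]_m * 'rV[R]_m => (p.1 *m N, p.2 *m N)).
Proof.
move=> p; have fst_cont : {for p, continuous fst} by apply: cvg_fst.
have snd_cont : {for p, continuous snd} by apply: cvg_snd.
have h1 := continuous_comp fst_cont (@mulmx_continuous _ _ N p.1).
have h2 := continuous_comp snd_cont (@mulmx_continuous _ _ N p.2).
exact: (cvg_pair h1 h2).
Qed.

End MatrixContinuity.

(* [period_cone Q] is [period_coneR (map_mx intr Q)] up to conversion. *)
Definition period_coneR (R : realType) n (M : 'M[R]_n) : set ('rV[R]_n * 'rV[R]_n) :=
  [set p | bform M p.1 p.1 = bform M p.2 p.2 /\ bform M p.1 p.2 = 0 /\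
           0 < bform M p.1 p.1 + bform M p.2 p.2].

Lemma period_coneR_mulmx (R : realType) n m (M : 'M[R]_n) (N : 'M[R]_(m, n)) p :
  period_coneR M (p.1 *m N, p.2 *m N) = period_coneR (N *m M *m N^T) p.
Proof. by rewrite /period_coneR /= !bform_mulmx. Qed.

Lemma period_coneR_gram_schmidt (R : realType) n (M : 'M[R]_n) (X Y : 'rV[R]_n) (A B C : R) :
  M^T = M -> bform M X X = A -> bform M X Y = B -> bform M Y Y = C ->
  0 < A -> 0 < A * C - B ^+ 2 ->
  let s := Num.sqrt (A * C - B ^+ 2) in period_coneR M (X, (A / s) *: Y - (B / s) *: X).
Proof.
move=> M_sym XX XY YY A_gt0 disc_gt0 s.
have s_gt0 : 0 < s by rewrite sqrtr_gt0.
have s2 : s ^+ 2 = A * C - B ^+ 2 by rewrite sqr_sqrtr // ltW.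
have YX : bform M Y X = B by rewrite (bform_sym _ _ M_sym).
have orth : bform M X ((A / s) *: Y - (B / s) *: X) = 0.
  by rewrite bformBr !bformZr XY XX; field; rewrite gt_eqF.
have norm : bform M ((A / s) *: Y - (B / s) *: X) ((A / s) *: Y - (B / s) *: X) = A.
  rewrite !(bformBl, bformBr, bformZl, bformZr) XX XY YX YY.
  rewrite [LHS](_ : _ = A * (A * C - B ^+ 2) / s ^+ 2); last by field; rewrite gt_eqF.
  by rewrite -s2 mulfK // expf_neq0 // gt_eqF.
by rewrite /period_coneR /= orth norm; split; [|split; [|lra]].
Qed.

Section PathToPerp.
Variables (R : realType) (n : nat) (M : 'M[R]_n) (e x y : 'rV[R]_n).
Hypotheses (M_sym : M^T = M) (ee : bform M e e = -2) (xy_cone : period_coneR M (x, y)).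

(* [X t], [Y t] move [x], [y] towards their projections to e^perp, reached at
   [t = 1]; [path t] re-orthonormalizes [Y t] against [X t] by Gram-Schmidt. *)
Let a := bform M x e.
Let b := bform M y e.
Let r := bform M x x.
Let rho (t : R) := t * (2 - t) / 2.
Let A t := r + rho t * a ^+ 2.
Let B t := rho t * (a * b).
Let C t := r + rho t * b ^+ 2.
Let disc t := A t * C t - B t ^+ 2.
Let X t := x + (t * a / 2) *: e.
Let Y t := y + (t * b / 2) *: e.
Let path t := (X t, (A t / Num.sqrt (disc t)) *: Y t - (B t / Num.sqrt (disc t)) *: X t).

Let r_gt0 : 0 < r.
Proof. by case: xy_cone => /= xx [_]; rewrite -xx -/r; lra. Qed.

Let rho_ge0 t : 0 <= t <= 1 -> 0 <= rho t.
Proof. by move=> /andP[t0 t1]; rewrite /rho divr_ge0 ?mulr_ge0 ?subr_ge0; lra. Qed.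

Let disc_gt0 t : 0 <= t <= 1 -> 0 < disc t.
Proof.
move=> /rho_ge0 rho_nneg.
have -> : disc t = r * (r + rho t * (a ^+ 2 + b ^+ 2)) by rewrite /disc /A /B /C; ring.
have := mulr_ge0 rho_nneg (addr_ge0 (sqr_ge0 a) (sqr_ge0 b)); have := r_gt0; nra.
Qed.

Let bform_XX t : bform M (X t) (X t) = A t.
Proof.
by rewrite /X !(bformDl, bformDr, bformZl, bformZr) (bform_sym e x M_sym) ee -/a -/r /A /rho; field.
Qed.

Let bform_XY t : bform M (X t) (Y t) = B t.
Proof.
have [_ [xy _]] := xy_cone.
rewrite /X /Y !(bformDl, bformDr, bformZl, bformZr) (bform_sym e y M_sym) ee xy -/a -/b.
by rewrite /B /rho; field.
Qed.

Let bform_YY t : bform M (Y t) (Y t) = C t.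
Proof.
have [xx [_ _]] := xy_cone.
rewrite /Y !(bformDl, bformDr, bformZl, bformZr) (bform_sym e y M_sym) ee -xx -/b -/r.
by rewrite /C /rho; field.
Qed.

Let path_cone t : 0 <= t <= 1 -> period_coneR M (path t).
Proof.
move=> t01; apply: period_coneR_gram_schmidt => //; last exact: disc_gt0.
by rewrite /A; have := mulr_ge0 (rho_ge0 t01) (sqr_ge0 a); have := r_gt0; lra.
Qed.

Let path_continuous : {in `[0, 1]%R, continuous path}.
Proof.
move=> t; rewrite in_itv /= => t01.
have affine_c (c k : R) (f : R -> R) : continuous f -> continuous (fun s => c + f s * k).
  by move=> f_c s; apply: cvgD; [exact: cvg_cst|apply: cvgM; [exact: f_c|exact: cvg_cst]].
have rho_c : continuous rho.
  by move=> s; apply: cvgM; [apply: cvgM; [|apply: cvgB]|]; exact: cvg_cst || exact: cvg_id.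
have A_c : continuous A := affine_c _ _ _ rho_c.
have B_c : continuous B by move=> s; apply: cvgM; [exact: rho_c|exact: cvg_cst].
have C_c : continuous C := affine_c _ _ _ rho_c.
have disc_c : continuous disc.
  move=> s; apply: cvgB; apply: cvgM;
  by [exact: A_c|exact: C_c|exact: B_c|exact: B_c].
have vec_c (v : 'rV[R]_n) (k : R) : continuous (fun s : R => v + (s * k / 2) *: e).
  move=> s; apply: cvgD; first exact: cvg_cst.
  by apply: cvgZr_tmp; apply: cvgM; [apply: cvgM|]; exact: cvg_cst || exact: cvg_id.
have isqrt_c : {for t, continuous (fun s => (Num.sqrt (disc s))^-1)}.
  apply: cvgV; first by rewrite gt_eqF // sqrtr_gt0 disc_gt0.
  exact: continuous_comp (disc_c t) (@sqrt_continuous R (disc t)).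
have path2_c : {for t, continuous (fun s => (path s).2)}.
  apply: cvgB; apply: cvgZ; try apply: cvgM;
  by exact: A_c || exact: B_c || exact: isqrt_c || exact: vec_c.
exact: cvg_pair (vec_c x a t) path2_c.
Qed.

Let path0 : path 0 = (x, y).
Proof.
have rho0 : rho 0 = 0 by rewrite /rho mul0r mul0r.
have sqrt0 : Num.sqrt (disc 0) = r.
  by rewrite /disc /A /B /C rho0 !mul0r !addr0 expr0n subr0 sqrtr_sqr ger0_norm // ltW.
rewrite /path /X /Y sqrt0 /A /B rho0 !mul0r !scale0r !addr0 subr0 mulfV ?scale1r //.
by rewrite gt_eqF.
Qed.

Let path1_perp : bform M (path 1).1 e = 0 /\ bform M (path 1).2 e = 0.
Proof.
have X1 : bform M (X 1) e = 0 by rewrite /X bformDl bformZl ee -/a; field.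
have Y1 : bform M (Y 1) e = 0 by rewrite /Y bformDl bformZl ee -/b; field.
by rewrite /= bformBl !bformZl X1 Y1 !mulr0 subr0.
Qed.

Lemma period_coneR_connected_perp : exists q,
  connected_component (period_coneR M) (x, y) q /\ bform M q.1 e = 0 /\ bform M q.2 e = 0.
Proof.
exists (path 1); split; last exact: path1_perp.
by rewrite -path0; apply: connected_component_path => // t /path_cone.
Qed.

End PathToPerp.

Lemma period_coneR_component_extension (R : realType) n m (M : 'M[R]_n) (e : 'rV[R]_n)
    (B : 'M[R]_(m, n)) (h : 'M[R]_m) (g : 'M[R]_n) :
  M^T = M -> bform M e e = -2 -> (forall X, bform M X e = 0 -> exists c, X = c *m B) ->
  g *m M *m g^T = M -> B *m g = h *m B ->
  (forall p, period_coneR (B *m M *m B^T) p ->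
     connected_component (period_coneR (B *m M *m B^T)) p (p.1 *m h, p.2 *m h)) ->
  forall p, period_coneR M p -> connected_component (period_coneR M) p (p.1 *m g, p.2 *m g).
Proof.
move=> M_sym ee B_span g_iso Bg h_comp [x y] xy_cone.
have [[X Y] [pq [Xe Ye]]] := period_coneR_connected_perp M_sym ee xy_cone.
have [c1 c1E] := B_span X Xe; have [c2 c2E] := B_span Y Ye; rewrite c1E c2E in pq.
have q_cone : period_coneR (B *m M *m B^T) (c1, c2).
  by rewrite -period_coneR_mulmx; exact: connected_component_sub pq.
have g_cone q : period_coneR M q -> period_coneR M (q.1 *m g, q.2 *m g).
  by rewrite period_coneR_mulmx g_iso.
have B_cone q : period_coneR (B *m M *m B^T) q -> period_coneR M (q.1 *m B, q.2 *m B).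
  by rewrite period_coneR_mulmx.
have qg := connected_component_map (@pair_mulmx_continuous _ _ _ g) g_cone pq.
have q_qg : connected_component (period_coneR M) (c1 *m B, c2 *m B) (c1 *m B *m g, c2 *m B *m g).
  rewrite -!mulmxA Bg !mulmxA.
  by have := connected_component_map (@pair_mulmx_continuous _ _ _ B) B_cone (h_comp _ q_cone).
apply: connected_component_trans pq _; apply: connected_component_trans q_qg _.
exact: connected_component_sym qg.
Qed.

(** * The lattice Lambda *)

Lemma all_iota_pairs n (P : nat -> nat -> bool) :
  all (fun i => all (P i) (iota 0 n)) (iota 0 n) -> forall i j : 'I_n, P i j.
Proof.
move=> /allP Pall i j.
have /allP Pi : all (P i) (iota 0 n) by apply: Pall; rewrite mem_iota ltn_ord.
by apply: Pi; rewrite mem_iota ltn_ord.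
Qed.

Lemma lambda_sym : gramLambda^T = gramLambda.
Proof.
apply/matrixP => i j; rewrite !mxE; apply/eqP; move: i j.
by apply: (@all_iota_pairs 12 (fun i j => lambda_entry j i == lambda_entry i j)); vm_compute.
Qed.

(* Off the unimodular summand U (coordinates 2 and 3) the Gram matrix of Lambda is
   twice an even matrix. *)
Definition lambda_half_entry (i j : nat) : int :=
  if (i < j)%N then (if (i == 2) && (j == 3) then 0 else (lambda_entry i j %/ 2)%Z)
  else if i == j then (lambda_entry i i %/ 4)%Z else 0.

Definition lambda_half : 'M[int]_12 := \matrix_(i, j) lambda_half_entry i j.

Definition iU1 : 'I_12 := @Ordinal 12 2 isT.
Definition iU2 : 'I_12 := @Ordinal 12 3 isT.

Lemma lambda_decomp :
  gramLambda = 2%:Z *: (lambda_half + lambda_half^T) + (delta_mx iU1 iU2 + delta_mx iU2 iU1).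
Proof.
apply/matrixP => i j; rewrite !mxE; apply/eqP; move: i j.
apply: (@all_iota_pairs 12 (fun i j => lambda_entry i j ==
  2%:Z * (lambda_half_entry i j + lambda_half_entry j i) +
  (((i == 2) && (j == 3))%:R + ((i == 3) && (j == 2))%:R))).
by vm_compute.
Qed.

Lemma lambda_form_mod2 a b : exists k,
  bform gramLambda a b = 2 * k + (a 0 iU1 * b 0 iU2 + a 0 iU2 * b 0 iU1).
Proof.
exists (bform lambda_half a b + bform lambda_half b a).
by rewrite lambda_decomp bformDM bformZM bformDM bform_trmx bformDM !bform_delta_mx.
Qed.

Lemma lambda_norm_mod4 a : exists k,
  bform gramLambda a a = 4 * k + 2 * (a 0 iU1 * a 0 iU2).
Proof.
exists (bform lambda_half a a).
rewrite lambda_decomp bformDM bformZM bformDM bform_trmx bformDM !bform_delta_mx.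
by ring.
Qed.

Lemma lambda_dvd4_even r :
  (forall y, (4 %| bform gramLambda r y)%Z) -> exists r', r = 2 *: r'.
Proof.
move=> r4; exists (\row_i (r ord0 i %/ 2)%Z); apply/rowP => i; rewrite !mxE.
suff : (2 %| r ord0 i)%Z by move: (r ord0 i) => x; lia.
have col4 j : (j < 12)%N -> (4 %| \sum_(k < 12) r ord0 (inord k) * lambda_entry k j)%Z.
  move=> ltj; rewrite [X in (_ %| X)%Z](_ : _ = (r *m gramLambda) 0 (Ordinal ltj)).
    by rewrite -bform_deltar.
  by rewrite mxE; apply: eq_bigr => k _; rewrite inord_val mxE.
(* Lambda meets 4 Lambda^vee in 2 Lambda: for each coordinate, lia finds the integer
   combination of these column congruences that isolates it. *)
move: (col4 0 isT) (col4 1 isT) (col4 2 isT) (col4 3 isT) (col4 4 isT) (col4 5 isT)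
  (col4 6 isT) (col4 7 isT) (col4 8 isT) (col4 9 isT) (col4 10 isT) (col4 11 isT).
rewrite !big_ord_recl big_ord0 /= /lambda_entry /bump /= ?mulr0 ?addr0 ?mulr1 ?addn0 ?add1n.
rewrite -[i]inord_val; case: i => [k ltk] /=.
by do 12 (case: k ltk => [|k] ltk; first lia).
Qed.

Lemma int_parity (x : int) : exists m, x = 2 * m \/ x = 2 * m + 1.
Proof. by exists (x %/ 2)%Z; lia. Qed.

Lemma lambda_glue_vector d : bform gramLambda d d = -2 ->
  exists z, bform gramLambda z d = 1 /\ forall w, bform gramLambda w d = 0 ->
    (2 * bform gramLambda z w = bform gramLambda w w %[mod 4])%Z.
Proof.
move=> dd; have [kd] := lambda_norm_mod4 d; rewrite dd => dd4.
have [p d2E] : exists p, d 0 iU1 = 2 * p + 1.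
  by have [p [d2E|]] := int_parity (d 0 iU1); [rewrite d2E in dd4; lia | exists p].
have [q d3E] : exists q, d 0 iU2 = 2 * q + 1.
  by have [q [d3E|]] := int_parity (d 0 iU2); [rewrite d3E in dd4; lia | exists q].
pose e : 'rV[int]_12 := delta_mx 0 iU2.
have [ke eE] := lambda_form_mod2 e d; rewrite !mxE /= mul0r mul1r add0r d2E in eE.
exists (e + (ke + p) *: d); split.
  by rewrite bformDl bformZl eE dd; ring.
move=> w wd; apply/eqP; rewrite eqz_mod_dvd bformDl bformZl (bform_sym d w lambda_sym) wd.
rewrite mulr0 addr0.
have [kw ->] := lambda_norm_mod4 w.
have [kew ->] := lambda_form_mod2 e w; rewrite !mxE /= mul0r mul1r add0r.
have [kwd] := lambda_form_mod2 w d; rewrite wd d2E d3E => wdE.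
have [a [w2E|w2E]] := int_parity (w 0 iU1); have [b [w3E|w3E]] := int_parity (w 0 iU2);
  rewrite w2E w3E in wdE *; nia.
Qed.

Theorem lemmaA1 (d : 'rV[int]_12) (hd : bil gramLambda d d = -2)
  (B : 'M[int]_(11, 12)) (hB : Zbasis_perp d B)
  (h : 'M[int]_11) (hh : Oplus (gramPerp B) h) :
  exists g : 'M[int]_12,
    Oplus gramLambda g /\ d *m g = d /\ B *m g = h *m B.
Proof.
have [hu /eqP h_iso] := andP hh.1.
have [B_perp [B_span B_free]] := hB.
have [z [zd z_char]] := lambda_glue_vector hd.
have [g [gu g_iso dg Bg]] := isometry_extends lambda_sym hd zd B_perp B_span B_free
  z_char lambda_dvd4_even hu h_iso.
exists g; split => //; split; first by rewrite /orthogonal_group gu g_iso eqxx.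
have [D DB] := perp_decomp_mx zd B_span.
apply: (period_coneR_component_extension (e := map_mx intr d) (B := map_mx intr B)
  (h := map_mx intr h)).
- by rewrite map_trmx lambda_sym.
- by rewrite bform_map (hd : bform _ d d = _) rmorphN rmorph_nat.
- move=> X Xd; exists (X *m map_mx intr D); apply: (perp_coord (z := map_mx intr z) _ Xd).
  by rewrite map_trmx -!map_mxM -map_mxD DB map_mx1.
- by rewrite map_trmx -!map_mxM g_iso.
- by rewrite -!map_mxM Bg.
- by rewrite map_trmx -!map_mxM; exact: hh.2.
Qed.
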